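(* Let $(\gamma,\delta)$ be any sequent, i.e. any ordered pair of annotated terms. Then $(\gamma,\delta)$ is derivable in the orthologic sequent calculus $\mathcal{P}$ if and only if $(\gamma,\delta)$ is valid in every ortholattice under every valuation. The ''if'' direction is completeness and the ''only if'' direction is soundness.
   Context: Terms are generated by the grammar $t ::= \mathrm{Var}(k) \mid \mathrm{Meet}(t,t) \mid \mathrm{Join}(t,t) \mid \mathrm{Not}(t)$, where $k$ ranges over positive integers. An annotated term is either $N$ (no formula), $L\,t$ (the term $t$ on the left), or $R\,t$ (the term $t$ on the right), for a term $t$. A sequent is an ordered pair $(\gamma,\delta)$ of annotated terms. An ortholattice is a structure $(S,\wedge,\vee,0,1,\neg)$ satisfying, for all $x,y,z$: - $x\vee y=y\vee x$ and $x\wedge y=y\wedge x$; - $x\vee(y\vee z)=(x\vee y)\vee z$ and $x\wedge(y\wedge z)=(x\wedge y)\wedge z$; - $x\vee x=x$ and $x\wedge x=x$; - $x\vee 1=1$ and $x\wedge 0=0$; - $x\vee 0=x$ and $x\wedge 1=x$; - $\neg\neg x=x$; - $x\vee\neg x=1$ and $x\wedge\neg x=0$; - $\neg(x\vee y)=\neg x\wedge\neg y$ and $\neg(x\wedge y)=\neg x\vee\neg y$; - $x\vee(x\wedge y)=x$ and $x\wedge(x\vee y)=x$. Its order is given by $x\le y \iff x\wedge y=x$. Given an ortholattice $O$ and a valuation $v$ from positive integers to $O$, a term $t$ evaluates to $[\![t]\!]_v\in O$ in the obvious way, with $\mathrm{Meet}\mapsto\wedge$, $\mathrm{Join}\mapsto\vee$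 and $\mathrm{Not}\mapsto\neg$. For annotated terms set $\lambda(L\,t)=[\![t]\!]_v$, $\lambda(R\,t)=\neg[\![t]\!]_v$ and $\lambda(N)=1$. The sequent $(\gamma,\delta)$ is valid in $O$ under $v$ if $\lambda(\gamma)\le\neg\lambda(\delta)$. For example, $(L\,s,R\,t)$ is valid iff $[\![s]\!]_v\le[\![t]\!]_v$. The proof system $\mathcal{P}$: the derivable sequents form the least set of sequents closed under the following rules, where $\gamma,\delta$ are arbitrary annotated terms and $a,b$ are terms. - Hyp: $(L\,a,R\,a)$. - Weaken: from $(\gamma,N)$ infer $(\gamma,\delta)$. - Contract: from $(\gamma,\gamma)$ infer $(\gamma,N)$. - Swap: from $(\gamma,\delta)$ infer $(\delta,\gamma)$. - LeftAnd1 and LeftAnd2: from $(\gamma,L\,a)$, respectively from $(\gamma,L\,b)$, infer $(\gamma,L\,\mathrm{Meet}(a,b))$. - LeftOr: from $(\gamma,L\,a)$ and $(\gamma,L\,b)$ infer $(\gamma,L\,\mathrm{Join}(a,b))$. - LeftNot: from $(\gamma,R\,a)$ infer $(\gamma,L\,\mathrm{Not}(a))$. - RightAnd: from $(\gamma,R\,a)$ and $(\gamma,R\,b)$ infer $(\gamma,R\,\mathrm{Meet}(a,b))$. - RightOr1 and RightOr2: from $(\gamma,R\,a)$, respectively from $(\gamma,R\,b)$, infer $(\gamma,R\,\mathrm{Join}(a,b))$. - RightNot: from $(\gamma,L\,a)$ infer $(\gamma,R\,\mathrm{Not}(a))$. - Cut: from $(\gamma,R\,b)$ and $(L\,b,\delta)$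 infer $(\gamma,\delta)$. *)

From Stdlib Require Import BinNums.

Inductive term : Type :=
| Var : positive -> term
| Meet : term -> term -> term
| Join : term -> term -> term
| Not : term -> term.

Inductive aterm : Type :=
| N : aterm
| L : term -> aterm
| R : term -> aterm.

Definition sequent : Type := (aterm * aterm)%type.

Inductive derivable : aterm -> aterm -> Prop :=
| Hyp : forall a, derivable (L a) (R a)
| Weaken : forall g d, derivable g N -> derivable g d
| Contract : forall g, derivable g g -> derivable g N
| Swap : forall g d, derivable g d -> derivable d g
| LeftAnd1 : forall g a b, derivable g (L a) -> derivable g (L (Meet a b))
| LeftAnd2 : forall g a b, derivable g (L b) -> derivable g (L (Meet a b))
| LeftOr : forall g a b, derivable g (L a) -> derivable g (L b) ->
    derivable g (L (Join a b))
| LeftNot : forall g a, derivable g (R a) -> derivable g (L (Not a))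
| RightAnd : forall g a b, derivable g (R a) -> derivable g (R b) ->
    derivable g (R (Meet a b))
| RightOr1 : forall g a b, derivable g (R a) -> derivable g (R (Join a b))
| RightOr2 : forall g a b, derivable g (R b) -> derivable g (R (Join a b))
| RightNot : forall g a, derivable g (L a) -> derivable g (R (Not a))
| Cut : forall g d b, derivable g (R b) -> derivable (L b) d -> derivable g d.

Record Ortholattice : Type := {
  carrier :> Type;
  ol_meet : carrier -> carrier -> carrier;
  ol_join : carrier -> carrier -> carrier;
  ol_zero : carrier;
  ol_one : carrier;
  ol_neg : carrier -> carrier;
  ol_joinC : forall x y, ol_join x y = ol_join y x;
  ol_meetC : forall x y, ol_meet x y = ol_meet y x;
  ol_joinA : forall x y z, ol_join x (ol_join y z) = ol_join (ol_join x y) z;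
  ol_meetA : forall x y z, ol_meet x (ol_meet y z) = ol_meet (ol_meet x y) z;
  ol_joinxx : forall x, ol_join x x = x;
  ol_meetxx : forall x, ol_meet x x = x;
  ol_join1 : forall x, ol_join x ol_one = ol_one;
  ol_meet0 : forall x, ol_meet x ol_zero = ol_zero;
  ol_join0 : forall x, ol_join x ol_zero = x;
  ol_meet1 : forall x, ol_meet x ol_one = x;
  ol_negK : forall x, ol_neg (ol_neg x) = x;
  ol_joinN : forall x, ol_join x (ol_neg x) = ol_one;
  ol_meetN : forall x, ol_meet x (ol_neg x) = ol_zero;
  ol_negJ : forall x y, ol_neg (ol_join x y) = ol_meet (ol_neg x) (ol_neg y);
  ol_negM : forall x y, ol_neg (ol_meet x y) = ol_join (ol_neg x) (ol_neg y);
  ol_absJ : forall x y, ol_join x (ol_meet x y) = x;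
  ol_absM : forall x y, ol_meet x (ol_join x y) = x
}.

Definition ol_le (O : Ortholattice) (x y : O) : Prop := ol_meet O x y = x.

Fixpoint eval (O : Ortholattice) (v : positive -> O) (t : term) : O :=
  match t with
  | Var k => v k
  | Meet a b => ol_meet O (eval O v a) (eval O v b)
  | Join a b => ol_join O (eval O v a) (eval O v b)
  | Not a => ol_neg O (eval O v a)
  end.

Definition lam (O : Ortholattice) (v : positive -> O) (g : aterm) : O :=
  match g with
  | N => ol_one O
  | L t => eval O v t
  | R t => ol_neg O (eval O v t)
  end.

Definition valid_in (O : Ortholattice) (v : positive -> O) (g d : aterm) : Prop :=
  ol_le O (lam O v g) (ol_neg O (lam O v d)).

(* Soundness: every rule of P is an ortholattice inequality between the values
   [lam γ] and [¬ lam δ], so validity is preserved along derivations.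
   Completeness: the relation "(L a, R b) is derivable" is a preorder on terms
   whose quotient (the Lindenbaum–Tarski algebra) is an ortholattice.  Under the
   valuation k ↦ [Var k] every term evaluates to its own class, so a sequent
   valid there gives a derivation of (L a, R b) for terms a, b encoding its two
   sides, from which the sequent itself is recovered with Cut. *)

From Pilot Require Import Defs.
From Stdlib Require Import BinNums.
From Stdlib Require Import ProofIrrelevance FunctionalExtensionality
  PropExtensionality ClassicalEpsilon.

Section OrtholatticeOrder.

Variable O : Ortholattice.

Local Notation "x <= y" := (ol_le O x y).

Lemma ol_le_refl (x : O) : x <= x.
Proof. apply ol_meetxx. Qed.

Lemma ol_le_trans (x y z : O) : x <= y -> y <= z -> x <= z.
Proof.
  unfold ol_le; intros Hxy Hyz.
  rewrite <- Hxy at 1. rewrite <- ol_meetA, Hyz. exact Hxy.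
Qed.

Lemma ol_le_meetl (x y : O) : ol_meet O x y <= x.
Proof. unfold ol_le. rewrite ol_meetC, ol_meetA, ol_meetxx. reflexivity. Qed.

Lemma ol_le_meetr (x y : O) : ol_meet O x y <= y.
Proof. unfold ol_le. rewrite <- ol_meetA, ol_meetxx. reflexivity. Qed.

Lemma ol_le_meet (x y z : O) : z <= x -> z <= y -> z <= ol_meet O x y.
Proof. unfold ol_le; intros Hx Hy. rewrite ol_meetA, Hx. exact Hy. Qed.

Lemma ol_le_joinl (x y : O) : x <= ol_join O x y.
Proof. apply ol_absM. Qed.

Lemma ol_le_joinr (x y : O) : y <= ol_join O x y.
Proof. rewrite ol_joinC. apply ol_absM. Qed.

Lemma ol_le_one (x : O) : x <= ol_one O.
Proof. apply ol_meet1. Qed.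

Lemma ol_zero_le (x : O) : ol_zero O <= x.
Proof. unfold ol_le. rewrite ol_meetC. apply ol_meet0. Qed.

Lemma ol_le_neg (x y : O) : x <= y -> ol_neg O y <= ol_neg O x.
Proof.
  unfold ol_le; intros Hxy.
  rewrite <- Hxy at 1. rewrite ol_negM, (ol_joinC _ (ol_neg O x)). apply ol_absM.
Qed.

Lemma ol_le_negr (x y : O) : x <= ol_neg O y -> y <= ol_neg O x.
Proof. intros Hxy. rewrite <- (ol_negK O y). exact (ol_le_neg _ _ Hxy). Qed.

End OrtholatticeOrder.

Lemma derivable_valid (g d : aterm) :
  derivable g d -> forall (O : Ortholattice) (v : positive -> O), valid_in O v g d.
Proof.
  intros Hgd O v. unfold valid_in.
  induction Hgd; simpl in *; try rewrite ol_negK in *.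
  - apply ol_le_refl.
  - eapply ol_le_trans; [exact IHHgd | apply ol_le_neg, ol_le_one].
  - eapply ol_le_trans; [| apply ol_zero_le]. rewrite <- (ol_meetN O (lam O v g)).
    apply ol_le_meet; [apply ol_le_refl | exact IHHgd].
  - apply ol_le_negr, IHHgd.
  - eapply ol_le_trans; [exact IHHgd | apply ol_le_neg, ol_le_meetl].
  - eapply ol_le_trans; [exact IHHgd | apply ol_le_neg, ol_le_meetr].
  - rewrite ol_negJ. apply ol_le_meet; assumption.
  - exact IHHgd.
  - apply ol_le_meet; assumption.
  - eapply ol_le_trans; [exact IHHgd | apply ol_le_joinl].
  - eapply ol_le_trans; [exact IHHgd | apply ol_le_joinr].
  - exact IHHgd.
  - eapply ol_le_trans; eassumption.
Qed.

Definition entails (a b : term) : Prop := derivable (L a) (R b).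

Lemma entails_refl (a : term) : entails a a.
Proof. apply Hyp. Qed.

Lemma entails_trans (a b c : term) : entails a b -> entails b c -> entails a c.
Proof. apply Cut. Qed.

Lemma entails_meetl (a b : term) : entails (Meet a b) a.
Proof. apply Swap, LeftAnd1, Swap, Hyp. Qed.

Lemma entails_meetr (a b : term) : entails (Meet a b) b.
Proof. apply Swap, LeftAnd2, Swap, Hyp. Qed.

Lemma entails_meet (a b c : term) : entails c a -> entails c b -> entails c (Meet a b).
Proof. apply RightAnd. Qed.

Lemma entails_joinl (a b : term) : entails a (Join a b).
Proof. apply RightOr1, Hyp. Qed.

Lemma entails_joinr (a b : term) : entails b (Join a b).
Proof. apply RightOr2, Hyp. Qed.

Lemma entails_join (a b c : term) : entails a c -> entails b c -> entails (Join a b) c.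
Proof. intros Hac Hbc. apply Swap, LeftOr; apply Swap; assumption. Qed.

Lemma entails_not_not (a : term) : entails a (Not (Not a)).
Proof. apply RightNot, LeftNot, Hyp. Qed.

Lemma entails_not_notK (a : term) : entails (Not (Not a)) a.
Proof. apply Swap, LeftNot, RightNot, Swap, Hyp. Qed.

Lemma entails_not (a b : term) : entails a b -> entails (Not b) (Not a).
Proof. intros Hab. apply RightNot, Swap, LeftNot, Hab. Qed.

Lemma derivable_contradiction (a : term) :
  derivable (L (Meet a (Not a))) (L (Meet a (Not a))).
Proof.
  apply (Cut _ _ _ (entails_meetl a (Not a))).
  apply LeftAnd2, LeftNot, Hyp.
Qed.

(* Contract is the only rule that empties a side; ex falso goes through it. *)
Lemma entails_contradiction (a c : term) : entails (Meet a (Not a)) c.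
Proof. apply Weaken, Contract, derivable_contradiction. Qed.

Definition bot : term := Meet (Var xH) (Not (Var xH)).
Definition top : term := Not bot.

Lemma entails_bot (c : term) : entails bot c.
Proof. apply entails_contradiction. Qed.

Lemma entails_top (a : term) : entails a top.
Proof. apply RightNot, Swap, Weaken, Contract, derivable_contradiction. Qed.

Lemma entails_excluded_middle (a : term) : entails top (Join a (Not a)).
Proof.
  apply (entails_trans _ (Not (Not (Join a (Not a))))); [| apply entails_not_notK].
  apply entails_not, (entails_trans _ (Meet (Not a) (Not (Not a))));
    [| apply entails_contradiction].
  apply entails_meet; apply entails_not; [apply entails_joinl | apply entails_joinr].
Qed.

Lemma entails_not_meet (a b : term) : entails (Not (Meet a b)) (Join (Not a) (Not b)).
Proof.
  apply (entails_trans _ (Not (Not (Join (Not a) (Not b))))); [| apply entails_not_notK].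
  apply entails_not, entails_meet; (eapply entails_trans; [| apply entails_not_notK]);
    apply entails_not; [apply entails_joinl | apply entails_joinr].
Qed.

Lemma entails_meet_not (a b : term) : entails (Meet (Not a) (Not b)) (Not (Join a b)).
Proof.
  apply (entails_trans _ _ _ (entails_not_not _)), entails_not.
  apply entails_join; apply (entails_trans _ _ _ (entails_not_not _)), entails_not;
    [apply entails_meetl | apply entails_meetr].
Qed.

Definition interderivable (a b : term) : Prop := entails a b /\ entails b a.

Lemma interderivable_refl (a : term) : interderivable a a.
Proof. split; apply entails_refl. Qed.

Lemma interderivable_sym (a b : term) : interderivable a b -> interderivable b a.
Proof. intros [Hab Hba]. split; assumption. Qed.

Lemma interderivable_trans (a b c : term) :
  interderivable a b -> interderivable b c -> interderivable a c.
Proof. intros [Hab Hba] [Hbc Hcb]. split; eapply entails_trans; eassumption. Qed.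

Lemma interderivable_Meet (a a' b b' : term) :
  interderivable a a' -> interderivable b b' -> interderivable (Meet a b) (Meet a' b').
Proof.
  intros [Ha Ha'] [Hb Hb'].
  split; apply entails_meet;
    eauto using entails_trans, entails_meetl, entails_meetr.
Qed.

Lemma interderivable_Join (a a' b b' : term) :
  interderivable a a' -> interderivable b b' -> interderivable (Join a b) (Join a' b').
Proof.
  intros [Ha Ha'] [Hb Hb'].
  split; apply entails_join;
    eauto using entails_trans, entails_joinl, entails_joinr.
Qed.

Lemma interderivable_Not (a a' : term) :
  interderivable a a' -> interderivable (Not a) (Not a').
Proof. intros [Ha Ha']. split; apply entails_not; assumption. Qed.

Section Quotient.

Variables (A : Type) (E : A -> A -> Prop).
Hypothesis E_refl : forall a, E a a.
Hypothesis E_sym : forall a b, E a b -> E b a.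
Hypothesis E_trans : forall a b c, E a b -> E b c -> E a c.

(* Classes are predicates, so equality of classes is Leibniz equality, as the
   carrier of an [Ortholattice] requires. *)
Definition quot : Type := {P : A -> Prop | exists a, P = E a}.

Definition class_of (a : A) : quot := exist _ (E a) (ex_intro _ a eq_refl).

Lemma class_of_eq (a b : A) : E a b -> class_of a = class_of b.
Proof.
  intros Hab. apply subset_eq_compat, functional_extensionality; intros c.
  apply propositional_extensionality; split; eauto.
Qed.

Lemma class_of_inj (a b : A) : class_of a = class_of b -> E a b.
Proof.
  intros Hab. apply (f_equal (@proj1_sig _ _)) in Hab. simpl in Hab.
  rewrite Hab. apply E_refl.
Qed.

Lemma class_of_surj (q : quot) : exists a, q = class_of a.
Proof.
  destruct q as [P [a ->]]. exists a. apply subset_eq_compat. reflexivity.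
Qed.

Definition repr (q : quot) : A :=
  proj1_sig (constructive_indefinite_description _ (class_of_surj q)).

Lemma class_of_repr (q : quot) : class_of (repr q) = q.
Proof.
  unfold repr. destruct (constructive_indefinite_description _ _) as [a Ha].
  symmetry; exact Ha.
Qed.

Lemma repr_class_of (a : A) : E (repr (class_of a)) a.
Proof. apply class_of_inj, class_of_repr. Qed.

Definition lift1 (f : A -> A) (q : quot) : quot := class_of (f (repr q)).

Definition lift2 (f : A -> A -> A) (q r : quot) : quot :=
  class_of (f (repr q) (repr r)).

Lemma lift1_class_of (f : A -> A) (a : A) :
  (forall a a', E a a' -> E (f a) (f a')) -> lift1 f (class_of a) = class_of (f a).
Proof. intros Hf. apply class_of_eq, Hf, repr_class_of. Qed.

Lemma lift2_class_of (f : A -> A -> A) (a b : A) :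
  (forall a a' b b', E a a' -> E b b' -> E (f a b) (f a' b')) ->
  lift2 f (class_of a) (class_of b) = class_of (f a b).
Proof. intros Hf. apply class_of_eq, Hf; apply repr_class_of. Qed.

End Quotient.

Arguments class_of {A} E a.
Arguments lift1 {A} E f q.
Arguments lift2 {A} E f q r.

Local Notation "[ a ]" := (class_of interderivable a).

Definition lmeet := lift2 interderivable Meet.
Definition ljoin := lift2 interderivable Join.
Definition lneg := lift1 interderivable Not.

Lemma lmeet_class (a b : term) : lmeet [a] [b] = [Meet a b].
Proof.
  exact (lift2_class_of _ _ interderivable_refl interderivable_sym interderivable_trans
           _ _ _ interderivable_Meet).
Qed.

Lemma ljoin_class (a b : term) : ljoin [a] [b] = [Join a b].
Proof.
  exact (lift2_class_of _ _ interderivable_refl interderivable_sym interderivable_trans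
           _ _ _ interderivable_Join).
Qed.

Lemma lneg_class (a : term) : lneg [a] = [Not a].
Proof.
  exact (lift1_class_of _ _ interderivable_refl interderivable_sym interderivable_trans
           _ _ interderivable_Not).
Qed.

Ltac entails_auto :=
  first
  [ apply entails_refl | apply entails_top | apply entails_bot
  | apply entails_contradiction | apply entails_not_not | apply entails_not_notK
  | apply entails_excluded_middle | apply entails_not_meet | apply entails_meet_not
  | apply entails_meet; entails_auto
  | apply entails_join; entails_auto
  | apply entails_not; entails_auto
  | eapply entails_trans; [apply entails_meetl | entails_auto]
  | eapply entails_trans; [apply entails_meetr | entails_auto]
  | eapply entails_trans; [| apply entails_joinl]; entails_auto
  | eapply entails_trans; [| apply entails_joinr]; entails_auto ].

Ltac lindenbaum_law :=
  intros;
  repeat match goal with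
  | q : quot _ _ |- _ =>
      let a := fresh "a" in destruct (class_of_surj _ _ q) as [a ->]; clear q
  end;
  repeat (rewrite lmeet_class || rewrite ljoin_class || rewrite lneg_class);
  apply class_of_eq; [exact interderivable_sym | exact interderivable_trans |];
  split; entails_auto.

Definition lindenbaum : Ortholattice.
Proof.
  refine {| carrier := quot term interderivable; ol_meet := lmeet; ol_join := ljoin;
            ol_zero := [bot]; ol_one := [top]; ol_neg := lneg |};
    lindenbaum_law.
Defined.

Definition var_class (k : positive) : lindenbaum := [Var k].

Lemma eval_var_class (t : term) : eval lindenbaum var_class t = [t].
Proof.
  induction t as [k | a IHa b IHb | a IHa b IHb | a IHa]; simpl.
  - reflexivity.
  - rewrite IHa, IHb. apply lmeet_class.
  - rewrite IHa, IHb. apply ljoin_class.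
  - rewrite IHa. apply lneg_class.
Qed.

Lemma lindenbaum_le_entails (a b : term) : ol_le lindenbaum [a] [b] -> entails a b.
Proof.
  unfold ol_le; simpl. rewrite lmeet_class.
  intros Hab. apply (class_of_inj _ _ interderivable_refl) in Hab as [_ Hab].
  exact (entails_trans _ _ _ Hab (entails_meetr a b)).
Qed.

(* The term whose value is [lam γ] in every ortholattice. *)
Definition aterm_term (g : aterm) : term :=
  match g with
  | Defs.N => top
  | L t => t
  | R t => Not t
  end.

Lemma lam_var_class (g : aterm) : lam lindenbaum var_class g = [aterm_term g].
Proof.
  destruct g as [| t | t]; simpl; rewrite ?eval_var_class; try reflexivity.
  apply lneg_class.
Qed.

Lemma derivable_of_aterm_term (g d : aterm) : derivable (L (aterm_term g)) d -> derivable g d.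
Proof.
  destruct g as [| t | t]; simpl; intros Hd.
  - refine (Cut _ _ _ _ Hd).
    apply Swap, Contract, RightNot, Swap, RightNot, derivable_contradiction.
  - exact Hd.
  - exact (Cut _ _ _ (RightNot _ _ (Swap _ _ (Hyp t))) Hd).
Qed.

Lemma derivable_of_entails (g d : aterm) :
  entails (aterm_term g) (Not (aterm_term d)) -> derivable g d.
Proof.
  intros Hgd. apply derivable_of_aterm_term, Swap, derivable_of_aterm_term, Swap.
  exact (Cut _ _ _ Hgd (Swap _ _ (LeftNot _ _ (Hyp _)))).
Qed.

Theorem mainTheorem1 (g d : aterm) :
  derivable g d <-> (forall (O : Ortholattice) (v : positive -> O), valid_in O v g d).
Proof.
  split; [apply derivable_valid |].
  intros Hvalid. apply derivable_of_entails, lindenbaum_le_entails.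
  specialize (Hvalid lindenbaum var_class). unfold valid_in in Hvalid.
  rewrite !lam_var_class in Hvalid. simpl in Hvalid. rewrite lneg_class in Hvalid.
  exact Hvalid.
Qed.
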